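(* Let $\mathbf{M}$ be the canonical adjacency matrix of a connected graph $G$ on $n\ge 2$ vertices. Then the $(n-1)\times(n-1)$ matrix obtained from $\mathbf{M}$ by deleting its last row and last column is the canonical adjacency matrix of a connected graph (namely the subgraph of $G$ induced by all vertices but the last one in the ordering of $\mathbf{M}$). In particular, the vertex corresponding to the last row/column of $\mathbf{M}$ is not a cut vertex of $G$.
   Context: For an $n\times n$ adjacency matrix $\mathbf{M}$ of a finite simple graph (with respect to some ordering of its vertices), its bit-string is obtained by concatenating the entries strictly above the diagonal column by column, left to right, reading each column from top to bottom. The canonical adjacency matrix of a graph $G$ is the unique adjacency matrix of $G$ (over all orderings of its vertices) whose bit-string is lexicographically greatest. It is known that deleting the last row and column of a canonical adjacency matrix of $G$ yields the canonical adjacency matrix of the corresponding induced subgraph. *)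

From mathcomp Require Import all_boot all_order all_algebra.
Set Implicit Arguments. Unset Strict Implicit. Unset Printing Implicit Defensive.

Definition simple_graph (T : finType) (e : rel T) : Prop :=
  symmetric e /\ irreflexive e.

Definition connected_graph (T : finType) (e : rel T) : Prop :=
  forall x y : T, connect e x y.

Definition adjmx (T : finType) (e : rel T) (n : nat) (f : 'I_n -> T) : 'M[bool]_n :=
  \matrix_(i, j) e (f i) (f j).

(* Bit-string: entries strictly above the diagonal, column by column
   (left to right), each column top to bottom. *)
Definition bitstring (n : nat) (M : 'M[bool]_n) : seq bool :=
  flatten [seq [seq M i j | i : 'I_n <- enum 'I_n & (nat_of_ord i < nat_of_ord j)%N] | j <- enum 'I_n].

Fixpoint lexle (s t : seq bool) : bool :=
  match s, t with
  | [::], _ => true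
  | _ :: _, [::] => false
  | x :: s', y :: t' => (~~ x && y) || ((x == y) && lexle s' t')
  end.

Definition canonical_adj (T : finType) (e : rel T) (n : nat) (M : 'M[bool]_n) : Prop :=
  (exists f : 'I_n -> T, bijective f /\ M = adjmx e f) /\
  (forall g : 'I_n -> T, bijective g -> lexle (bitstring (adjmx e g)) (bitstring M)).

Definition del_vertex (T : finType) (v : T) : finType := {x : T | x != v}.
Definition del_rel (T : finType) (e : rel T) (v : T) : rel (del_vertex v) :=
  fun x y => e (val x) (val y).

Definition del_last (n : nat) (M : 'M[bool]_n.+1) : 'M[bool]_n :=
  \matrix_(i, j) M (widen_ord (leqnSn n) i) (widen_ord (leqnSn n) j).
Arguments del_rel {T} e v _ _.
Arguments del_vertex {T} v.

From mathcomp Require Import all_boot all_order all_algebra all_fingroup.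
Set Implicit Arguments. Unset Strict Implicit. Unset Printing Implicit Defensive.

(* Let f be the vertex ordering of the canonical matrix M of a connected graph
   G, and v = f n its last vertex.

   1. Deleting the last row and column is canonical for G - v.  The
      bit-string of M is the bit-string of its leading (n x n) block followed
      by the last column; any ordering of G - v extends by v to an ordering of
      G, so a lexicographically larger leading block would give a matrix of G
      larger than M.
   2. In a canonical ordering of a connected graph, every vertex but the first
      has a neighbour earlier in the ordering.  Otherwise let j be a vertex
      without one; connectivity yields an edge from some i < j to some k > j,
      and swapping j and k keeps the first j columns and turns a zero column
      j into a non-zero one, contradicting maximality.
   3. If every vertex but the first has an earlier neighbour, then deleting
      the last vertex keeps the graph connected: following earlier neighbours
      leads from any vertex to the first one without visiting the last. *)

Lemma lexle_cat_same s t u : lexle (s ++ t) (s ++ u) = lexle t u.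
Proof. by elim: s => //= x s ->; rewrite eqxx /=; case: x. Qed.

Lemma lexle_cat_lt a b x y : size a = size b -> ~~ lexle a b ->
  ~~ lexle (a ++ x) (b ++ y).
Proof.
elim: a b => [|c a IH] [|d b] //= [Hs]; case: c; case: d => //=; exact: IH.
Qed.

Lemma lexle_zero a b : size a = size b -> all negb b -> has id a -> ~~ lexle a b.
Proof.
elim: a b => [|c a IH] [|d b] //= [Hs] /andP[Hd Hb]; rewrite (negbTE Hd).
case: c => /= [//|Ha]; exact: IH.
Qed.

Lemma lexle_flatten (I : eqType) (s : seq I) (F G : I -> seq bool) x :
  x \in s -> (forall y, (index y s < index x s)%N -> F y = G y) ->
  size (F x) = size (G x) -> ~~ lexle (F x) (G x) ->
  ~~ lexle (flatten (map F s)) (flatten (map G s)).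
Proof.
elim: s => [|z s IH] //= Hx Hy Hs Hl.
have [Ezx|nzx] := eqVneq z x; first by subst z; apply: lexle_cat_lt.
move: Hx; rewrite in_cons eq_sym (negbTE nzx) /= => Hx.
have Fz : F z = G z by apply: Hy; rewrite /= eqxx (negbTE nzx).
rewrite Fz lexle_cat_same; apply: IH => // y Hy'.
have [<-|nzy] := eqVneq z y; first exact: Fz.
by apply: Hy; rewrite /= (negbTE nzx) (negbTE nzy) ltnS.
Qed.

Definition column_bits n (A : 'M[bool]_n) (j : 'I_n) : seq bool :=
  [seq A i j | i : 'I_n <- enum 'I_n & (nat_of_ord i < nat_of_ord j)%N].

Lemma bitstringE n (A : 'M[bool]_n) :
  bitstring A = flatten (map (column_bits A) (enum 'I_n)).
Proof. by []. Qed.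

Lemma size_column_bits n (A B : 'M[bool]_n) j :
  size (column_bits A j) = size (column_bits B j).
Proof. by rewrite !size_map. Qed.

Lemma size_bitstring n (A B : 'M[bool]_n) : size (bitstring A) = size (bitstring B).
Proof.
rewrite !bitstringE !size_flatten /shape -!map_comp; congr sumn.
by apply: eq_map => j /=; apply: size_column_bits.
Qed.

Lemma bitstring_del_last n (A : 'M[bool]_n.+1) :
  bitstring A = bitstring (del_last A) ++ column_bits A ord_max.
Proof.
rewrite !bitstringE enum_ordSr map_rcons flatten_rcons; congr (_ ++ _).
rewrite -map_comp; congr flatten; apply: eq_map => j /=.
rewrite /column_bits enum_ordSr filter_rcons /= ltnNge (ltnW (ltn_ord j)) /=.
by rewrite filter_map -map_comp; apply: eq_map => i /=; rewrite mxE.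
Qed.

Section DeleteLast.
Variables (T : finType) (e : rel T) (n : nat) (f : 'I_n.+1 -> T).
Hypothesis f_inj : injective f.
Let v := f ord_max.

Lemma widen_neq_max (i : 'I_n) : widen_ord (leqnSn n) i != ord_max.
Proof. by apply/eqP => /(congr1 val) /= E; move: (ltn_ord i); rewrite E ltnn. Qed.

Lemma widen_neq_last (i : 'I_n) : f (widen_ord (leqnSn n) i) != v.
Proof. by rewrite (inj_eq f_inj) widen_neq_max. Qed.

Definition restrict_last (i : 'I_n) : del_vertex v :=
  exist (fun x => x != v) _ (widen_neq_last i).

Lemma restrict_last_bij : #|T| = n.+1 -> bijective restrict_last.
Proof.
move=> HT; apply: inj_card_bij; last by rewrite card_sig cardC1 HT card_ord.
by move=> i j /(congr1 val) /= /f_inj /(congr1 val) /= E; apply: val_inj.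
Qed.

Lemma del_last_adjmx : del_last (adjmx e f) = adjmx (del_rel e v) restrict_last.
Proof. by apply/matrixP => i j; rewrite !mxE. Qed.

Definition extend_last (g : 'I_n -> del_vertex v) (i : 'I_n.+1) : T :=
  if unlift ord_max i is Some i' then val (g i') else v.

Lemma extend_last_bij g : #|T| = n.+1 -> bijective g -> bijective (extend_last g).
Proof.
move=> HT g_bij; apply: inj_card_bij; last by rewrite card_ord HT.
move=> i1 i2; rewrite /extend_last.
case: unliftP => [i1'|] ->; case: unliftP => [i2'|] -> //.
- by move/val_inj/(bij_inj g_bij) => ->.
- by move=> E; move: (valP (g i1')); rewrite E eqxx.
- by move=> E; move: (valP (g i2')); rewrite -E eqxx.
Qed.

Lemma unlift_widen (i : 'I_n) : unlift ord_max (widen_ord (leqnSn n) i) = Some i.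
Proof.
have -> : widen_ord (leqnSn n) i = lift ord_max i by apply: val_inj; exact: (esym (lift_max i)).
by rewrite liftK.
Qed.

Lemma del_last_extend g :
  del_last (adjmx e (extend_last g)) = adjmx (del_rel e v) g.
Proof. by apply/matrixP => i j; rewrite !mxE /extend_last !unlift_widen. Qed.

Lemma canonical_del_last : #|T| = n.+1 ->
  canonical_adj e (adjmx e f) -> canonical_adj (del_rel e v) (del_last (adjmx e f)).
Proof.
move=> HT [_ f_max]; rewrite del_last_adjmx; split.
  by exists restrict_last; split; first exact: restrict_last_bij.
move=> g g_bij; apply/negPn/negP => g_gt.
move: (f_max _ (extend_last_bij HT g_bij)); apply/negP.
rewrite (bitstring_del_last (adjmx e f)) bitstring_del_last del_last_extend.
by rewrite del_last_adjmx; apply: lexle_cat_lt => //; apply: size_bitstring.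
Qed.

Lemma connected_del_last : symmetric e -> bijective f -> (1 <= n)%N ->
  (forall j : 'I_n.+1, (0 < j)%N -> exists2 i : 'I_n.+1, (i < j)%N & e (f i) (f j)) ->
  connected_graph (del_rel e v).
Proof.
move=> e_sym [g fK gK] n_pos earlier.
have f0_neq : f ord0 != v.
  by rewrite /v (inj_eq f_inj); apply/eqP => /(congr1 val) /= E; rewrite -E in n_pos.
pose u0 : del_vertex v := exist (fun x => x != v) _ f0_neq.
have to_first m (u : del_vertex v) : val (g (val u)) = m -> connect (del_rel e v) u0 u.
  elim/ltn_ind: m u => m IH u Eu.
  have [m0|m_pos] := posnP m.
    have /(congr1 f) : g (val u) = ord0 by apply: val_inj; rewrite Eu m0.
    by rewrite gK => E; have -> : u = u0 by apply: val_inj; rewrite /= E.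
  have u_pos : (0 < g (val u))%N by rewrite Eu.
  have [i i_lt e_iu] := earlier (g (val u)) u_pos.
  have fi_neq : f i != v.
    rewrite /v (inj_eq f_inj); apply/eqP => E.
    by move: i_lt; rewrite E ltnNge -ltnS ltn_ord.
  pose w : del_vertex v := exist (fun x => x != v) _ fi_neq.
  apply: connect_trans (IH (g (f i)) _ w erefl) _; first by rewrite fK -Eu.
  by apply: connect1; move: e_iu; rewrite gK.
have del_sym : symmetric (del_rel e v) by move=> x y; rewrite /del_rel e_sym.
move=> x y; apply: connect_trans (to_first _ y erefl).
by rewrite (sym_connect_sym del_sym); apply: to_first _ x erefl.
Qed.

End DeleteLast.

Lemma path_crosses (T : finType) (e : rel T) (P : pred T) x p :
  path e x p -> P x -> ~~ P (last x p) -> exists a b, [&& P a, ~~ P b & e a b].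
Proof.
elim: p x => [|y p IH] x /=; first by move=> _ ->.
move=> /andP[exy Hp] Px Hl.
case Py: (P y); first exact: IH Hp Py Hl.
by exists x, y; rewrite Px Py exy.
Qed.

Lemma ord_lt_neq n (i j : 'I_n) : (i < j)%N -> j != i.
Proof. by move=> h; apply/eqP => E; move: h; rewrite E ltnn. Qed.

(* If position j has no earlier neighbour while a later position k does,
   swapping j and k yields a strictly larger bit-string: the columns before
   j are unchanged and column j goes from zero to non-zero. *)
Lemma swap_increases (T : finType) (e : rel T) n (f : 'I_n -> T) (i j k : 'I_n) :
  (j < k)%N -> (i < j)%N -> e (f i) (f k) ->
  (forall i' : 'I_n, (i' < j)%N -> e (f i') (f j) = false) ->
  ~~ lexle (bitstring (adjmx e (f \o tperm j k))) (bitstring (adjmx e f)).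
Proof.
move=> jk ij e_ik no_nb; rewrite !bitstringE.
apply: (lexle_flatten (x := j)); first by rewrite mem_enum.
- move=> y; rewrite !index_enum_ord => yj.
  apply/eq_in_map => i'; rewrite mem_filter => /andP[iy _].
  have i'j := ltn_trans iy yj.
  by rewrite !mxE /= !tpermD //; apply: ord_lt_neq => //; apply: ltn_trans jk.
- exact: size_column_bits.
- apply: lexle_zero; first exact: size_column_bits.
    apply/allP => z /mapP [i']; rewrite mem_filter => /andP[i'j _] ->.
    by rewrite mxE no_nb.
  apply/hasP; exists (adjmx e (f \o tperm j k) i j).
    by apply: map_f; rewrite mem_filter ij mem_enum.
  by rewrite mxE /= tpermL tpermD //; apply: ord_lt_neq => //; apply: ltn_trans jk.
Qed.

Lemma earlier_neighbour (T : finType) (e : rel T) n (f : 'I_n.+1 -> T) :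
  connected_graph e -> bijective f ->
  (forall g : 'I_n.+1 -> T, bijective g ->
     lexle (bitstring (adjmx e g)) (bitstring (adjmx e f))) ->
  forall j : 'I_n.+1, (0 < j)%N -> exists2 i : 'I_n.+1, (i < j)%N & e (f i) (f j).
Proof.
move=> e_conn f_bij f_max j j_pos.
have [/existsP[i /andP[]]|no_nb] :=
  boolP [exists i : 'I_n.+1, (i < j)%N && e (f i) (f j)]; first by exists i.
exfalso; have {}no_nb (i : 'I_n.+1) : (i < j)%N -> e (f i) (f j) = false.
  by move=> ij; apply/negP => E; move/existsP: no_nb; apply; exists i; rewrite ij E.
have [g fK gK] := f_bij.
have /connectP [p Hp Hl] := e_conn (f ord0) (f j).
have := path_crosses (P := fun z => (g z < j)%N) Hp.
rewrite /= -Hl !fK ltnn => /(_ j_pos isT) [a [b /and3P[a_lt b_ge e_ab]]].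
rewrite -(gK a) -(gK b) in e_ab.
have [Ebj|nbj] := eqVneq (g b) j; first by rewrite Ebj no_nb in e_ab.
have jb : (j < g b)%N.
  by rewrite ltn_neqAle leqNgt b_ge andbT eq_sym.
have swap_bij : bijective (f \o tperm j (g b)).
  by apply: bij_comp => //; exists (tperm j (g b)) => x; rewrite tpermK.
by move: (f_max _ swap_bij); apply/negP; apply: swap_increases jb a_lt e_ab no_nb.
Qed.

Theorem mainTheorem7 (T : finType) (e : rel T) (n : nat)
  (M : 'M[bool]_n.+1) (f : 'I_n.+1 -> T) :
  simple_graph e -> connected_graph e -> #|T| = n.+1 -> (1 <= n)%N ->
  bijective f -> M = adjmx e f -> canonical_adj e M ->
  canonical_adj (del_rel e (f ord_max)) (del_last M) /\
  connected_graph (del_rel e (f ord_max)).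
Proof.
move=> [e_sym _] e_conn HT n_pos f_bij -> M_can.
have f_inj := bij_inj f_bij.
split; first exact: canonical_del_last f_inj HT M_can.
have [_ f_max] := M_can.
exact: connected_del_last f_inj e_sym f_bij n_pos (earlier_neighbour e_conn f_bij f_max).
Qed.
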